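(* Let $X=\{1,\dots,n\}$, $Y$ finite, $Q$ a symmetric irreducible stochastic matrix on $Y$ (notation in context). Let $0\le k\le h\le n-1$ and let $\underline a=(a_0,\dots,a_m)$ be a type with $a_0+\cdots+a_m=h+1$ and $\ell(\underline a)\le k$; put $\underline a'=(a_0-1,a_1,\dots,a_m)$. Then every $F\in P_{h,\underline a',k}$ satisfies $$D_{h+1,\underline a}D^*_{h+1,\underline a}F=|Y|\,(n+\ell(\underline a)-k-h)(h-k+1)\,F.$$
   Context: $Q$ acts on $L(Y)$ by $(Qf)(y)=\sum_{y'}q(y,y')f(y')$, with distinct eigenvalues $\lambda_0=1,\dots,\lambda_m$ and eigenspaces $W_0$ (constants), $W_1,\dots,W_m$. For $0\le k\le n$, $\Theta_k$ is the set of functions $\theta$ with $\mathrm{dom}(\theta)$ a $k$-subset of $X$ and values in $Y$ ($\Theta_0$ consists of the empty function); $\varphi\subseteq\theta$ means $\mathrm{dom}\varphi\subseteq\mathrm{dom}\theta$ and $\theta|_{\mathrm{dom}\varphi}=\varphi$. For $1\le k\le n$: $D_k:L(\Theta_k)\to L(\Theta_{k-1})$, $(D_kF)(\varphi)=\sum_{\theta\in\Theta_k:\theta\supseteq\varphi}F(\theta)$, and $D_k^*:L(\Theta_{k-1})\to L(\Theta_k)$, $(D_k^*F)(\theta)=\sum_{\varphi\subseteq\theta}F(\varphi)$; $D_0:=0$. Types $\underline b=(b_0,\dots,b_m)$ of nonnegative integers, $|\underline b|=\sum b_i$, $\ell(\underline b)=b_1+\cdots+b_m$, $\underline b'=(b_0-1,b_1,\dots,b_m)$.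 A fundamental function of type $\underline b$ on a set $A$ with $|A|=|\underline b|$ is $F=\bigotimes_{j\in A}F^j$ ($F(\theta)=\prod_{j\in A}F^j(\theta(j))$ on $Y^A$, $0$ elsewhere) with each $F^j$ in some $W_{i_j}$ and exactly $b_i$ indices with $i_j=i$; $P_{k,\underline b,A}$ is their span and $P_{k,\underline b}=\bigoplus_{|A|=k}P_{k,\underline b,A}$ (so $P_{0,(0,\dots,0)}=L(\Theta_0)$; $\{0\}$ if an entry is negative). $D_{k,\underline b}$ is $D_k$ restricted to $P_{k,\underline b}$ and $D^*_{k,\underline b}$ is $D^*_k$ restricted to $P_{k-1,\underline b'}$. Spaces $P_{h,\underline b,k}$: for a type $\underline b$ with $|\underline b|=k$, $P_{k,\underline b,k}=\ker D_{k,\underline b}$; for $k<h\le n$ and $|\underline b|=h$ with $\ell(\underline b)\le k$, $P_{h,\underline b,k}=D^*_{h,\underline b}(P_{h-1,\underline b',k})$. *)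

From HB Require Import structures.
From mathcomp Require Import all_boot all_order all_algebra.
Set Implicit Arguments. Unset Strict Implicit. Unset Printing Implicit Defensive.
Import Order.TTheory GRing.Theory Num.Theory.
Local Open Scope ring_scope.

(* Scalars: an arbitrary numClosedFieldType C (e.g. the complex numbers);
   X = 'I_n, Y a finite type.  A partial function theta from X to Y is an
   element of {ffun 'I_n -> option Y}; dom theta = {j | theta j <> None}.
   L(Theta_k) is embedded in {ffun pfun -> C} as the functions supported on
   partial functions with domain of size k. *)

Definition pfun (n : nat) (Y : finType) := {ffun 'I_n -> option Y}.

Definition dom (n : nat) (Y : finType) (th : pfun n Y) : {set 'I_n} :=
  [set j | th j != None].

Definition psub (n : nat) (Y : finType) (phi th : pfun n Y) : bool :=
  [forall j, (phi j != None) ==> (th j == phi j)].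

Definition Dop (C : numClosedFieldType) (n : nat) (Y : finType) (k : nat)
  (F : {ffun pfun n Y -> C}) : {ffun pfun n Y -> C} :=
  [ffun phi => if (k == 0%N) || (#|dom phi| != k.-1) then 0
               else \sum_(th : pfun n Y | (#|dom th| == k) && psub phi th) F th].

Definition Dstar (C : numClosedFieldType) (n : nat) (Y : finType) (k : nat)
  (F : {ffun pfun n Y -> C}) : {ffun pfun n Y -> C} :=
  [ffun th => if (k == 0%N) || (#|dom th| != k) then 0
              else \sum_(phi : pfun n Y | (#|dom phi| == k.-1) && psub phi th) F phi].

Fixpoint qpow (C : numClosedFieldType) (Y : finType) (q : Y -> Y -> C) (t : nat)
  : Y -> Y -> C :=
  match t with
  | 0 => fun y y' => if y == y' then 1 else 0
  | t'.+1 => fun y y' => \sum_(z : Y) qpow q t' y z * q z y'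
  end.

Definition symmetric_stochastic_irreducible (C : numClosedFieldType) (Y : finType)
  (q : Y -> Y -> C) : Prop :=
  [/\ forall y y', q y y' = q y' y,
      forall y y', 0 <= q y y',
      forall y, \sum_(y' : Y) q y y' = 1
    & forall y y', exists t, 0 < qpow q t y y'].

Definition Qop (C : numClosedFieldType) (Y : finType) (q : Y -> Y -> C)
  (f : Y -> C) : Y -> C := fun y => \sum_(y' : Y) q y y' * f y'.

Definition eigen_enumeration (C : numClosedFieldType) (Y : finType)
  (q : Y -> Y -> C) (m : nat) (lam : 'I_m.+1 -> C) : Prop :=
  [/\ lam ord0 = 1,
      injective lam,
      forall i, exists f : Y -> C, (exists y, f y != 0) /\ Qop q f =1 (fun y => lam i * f y)
    & forall (mu : C) (f : Y -> C), (exists y, f y != 0) ->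
        Qop q f =1 (fun y => mu * f y) -> exists i, mu = lam i].

Definition inW (C : numClosedFieldType) (Y : finType) (q : Y -> Y -> C) (m : nat)
  (lam : 'I_m.+1 -> C) (i : 'I_m.+1) (f : Y -> C) : Prop :=
  Qop q f =1 (fun y => lam i * f y).

Definition type_size (m : nat) (b : 'I_m.+1 -> nat) : nat := \sum_(i < m.+1) b i.
Definition type_len (m : nat) (b : 'I_m.+1 -> nat) : nat :=
  \sum_(i < m.+1 | i != ord0) b i.
(* b' = (b_0 - 1, b_1, ..., b_m); only used where b_0 >= 1 *)
Definition type_prime (m : nat) (b : 'I_m.+1 -> nat) : 'I_m.+1 -> nat :=
  fun i => if i == ord0 then (b i).-1 else b i.

Definition isFund (C : numClosedFieldType) (n : nat) (Y : finType)
  (q : Y -> Y -> C) (m : nat) (lam : 'I_m.+1 -> C) (b : 'I_m.+1 -> nat)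
  (A : {set 'I_n}) (F : {ffun pfun n Y -> C}) : Prop :=
  exists (idx : 'I_n -> 'I_m.+1) (f : 'I_n -> Y -> C),
    [/\ forall j, j \in A -> inW q lam (idx j) (f j),
        forall i, #|[set j in A | idx j == i]| = b i
      & F = [ffun th : pfun n Y =>
               if dom th == A then
                 \prod_(j in A) (match th j with Some y => f j y | None => 0 end)
               else 0]].

Definition PkbA (C : numClosedFieldType) (n : nat) (Y : finType)
  (q : Y -> Y -> C) (m : nat) (lam : 'I_m.+1 -> C) (b : 'I_m.+1 -> nat)
  (A : {set 'I_n}) (F : {ffun pfun n Y -> C}) : Prop :=
  exists (r : nat) (c : 'I_r -> C) (G : 'I_r -> {ffun pfun n Y -> C}),
    (forall s, isFund q lam b A (G s)) /\
    F = [ffun th => \sum_(s < r) c s * G s th].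

Definition Pkb (C : numClosedFieldType) (n : nat) (Y : finType)
  (q : Y -> Y -> C) (m : nat) (lam : 'I_m.+1 -> C) (k : nat) (b : 'I_m.+1 -> nat)
  (F : {ffun pfun n Y -> C}) : Prop :=
  exists G : {set 'I_n} -> {ffun pfun n Y -> C},
    (forall A : {set 'I_n}, #|A| = k -> PkbA q lam b A (G A)) /\
    F = [ffun th => \sum_(A : {set 'I_n} | #|A| == k) G A th].

Fixpoint Phbk (C : numClosedFieldType) (n : nat) (Y : finType)
  (q : Y -> Y -> C) (m : nat) (lam : 'I_m.+1 -> C) (k h : nat)
  (b : 'I_m.+1 -> nat) (F : {ffun pfun n Y -> C}) {struct h} : Prop :=
  if h == k then
    [/\ type_size b = k, Pkb q lam k b F & Dop k F = 0]
  else
    match h with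
    | 0 => False
    | h'.+1 =>
        [/\ (k < h)%N, type_size b = h, (type_len b <= k)%N &
          exists G, Phbk q lam k h' (type_prime b) G /\ F = Dstar h G]
    end.

From HB Require Import structures.
From mathcomp Require Import all_boot all_order all_algebra.
From mathcomp Require Import ring.
Set Implicit Arguments. Unset Strict Implicit. Unset Printing Implicit Defensive.
Import Order.TTheory GRing.Theory Num.Theory.
Local Open Scope ring_scope.

(* Let (R F)(phi) = sum_{j in dom phi} sum_y F(phi[j := y]) resample one
   coordinate.  Since Q is symmetric and stochastic, an eigenvector of Q with
   eigenvalue <> 1 sums to 0, and by irreducibility the eigenvectors for 1 are
   constant; hence R acts on P_{k,b} as |Y| b_0, and D^* raises the eigenvalue
   of R by |Y|.  On level h, an eigenfunction F of R with eigenvalue c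
   satisfies D D^* F = D^* D F + ((n - h)|Y| - c) F.  Starting from D F = 0 on
   P_{k,b,k} and applying this identity along F = D^* G gives the eigenvalue by
   induction on h. *)

Section PartialFunctions.
Variables (n : nat) (Y : finType).
Implicit Types (th phi : pfun n Y) (i j : 'I_n) (o : option Y).

Definition upd th j o : pfun n Y := [ffun x => if x == j then o else th x].

Lemma in_dom th x : (x \in dom th) = (th x != None).
Proof. by rewrite inE. Qed.

Lemma dom_upd_Some th j y : dom (upd th j (Some y)) = j |: dom th.
Proof. by apply/setP=> x; rewrite !inE ffunE; case: (x =P _). Qed.

Lemma dom_upd_None th j : dom (upd th j None) = dom th :\ j.
Proof. by apply/setP=> x; rewrite !inE ffunE; case: (x =P _). Qed.

Lemma dom_upd_in th j y : j \in dom th -> dom (upd th j (Some y)) = dom th.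
Proof. by move=> jD; rewrite dom_upd_Some; apply/setUidPr; rewrite sub1set. Qed.

Lemma upd_upd th j o o' : upd (upd th j o) j o' = upd th j o'.
Proof. by apply/ffunP=> x; rewrite !ffunE; case: (x =P _). Qed.

Lemma updC th i j o o' : i != j ->
  upd (upd th i o) j o' = upd (upd th j o') i o.
Proof.
move=> ij; apply/ffunP=> x; rewrite !ffunE.
by case: (x =P j) => [->|//]; rewrite eq_sym (negbTE ij).
Qed.

Lemma upd_id th j o : th j = o -> upd th j o = th.
Proof. by move=> E; apply/ffunP=> x; rewrite !ffunE; case: (x =P _) => // ->. Qed.

Lemma card_dom_upd_None phi j h : j \in dom phi -> #|dom phi| = h.+1 ->
  #|dom (upd phi j None)| = h.
Proof. by move=> jD; rewrite dom_upd_None (cardsD1 j) jD add1n => -[]. Qed.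

Lemma exchange_big_setD1 (V : nmodType) (D : {set 'I_n}) (f : 'I_n -> 'I_n -> V) :
  \sum_(j in D) \sum_(i in D :\ j) f j i = \sum_(i in D) \sum_(j in D :\ i) f j i.
Proof.
rewrite (exchange_big_dep (mem D)) /=; last by move=> j i _; rewrite !inE => /andP[].
by apply: eq_bigr => i iD; apply: eq_bigl => j; rewrite !inE iD andbT eq_sym andbC.
Qed.

Lemma psub_dom phi th : psub phi th -> dom phi \subset dom th.
Proof.
move=> /forallP sub; apply/subsetP=> x; rewrite !inE => phix.
by move: (sub x); rewrite phix /= => /eqP ->.
Qed.

Lemma psub_upd_None th j : psub (upd th j None) th.
Proof. by apply/forallP=> x; apply/implyP; rewrite ffunE; case: (x =P _). Qed.

Lemma psub_upd_Some phi i y : phi i = None -> psub phi (upd phi i (Some y)).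
Proof.
move=> phii; apply/forallP=> x; apply/implyP; rewrite ffunE.
by case: (x =P i) => [->|//]; rewrite phii.
Qed.

Lemma psub_covers phi th : psub phi th -> #|dom th| = (#|dom phi|).+1 ->
  exists i y, [/\ phi i = None, th = upd phi i (Some y) & phi = upd th i None].
Proof.
move=> sub card_th; have sub_dom := psub_dom sub.
have : #|dom th :\: dom phi| == 1%N.
  by rewrite cardsD (setIidPr sub_dom) card_th subSn // subnn.
case/cards1P=> i diff_i.
have : i \in dom th :\: dom phi by rewrite diff_i set11.
rewrite !inE negbK => /andP[/eqP phii]; case thi: (th i) => [y|//] _.
have th_phi x : x != i -> th x = phi x.
  move=> xi; case phix: (phi x) => [z|].
    by move/forallP: sub => /(_ x); rewrite phix /= => /eqP.
  apply/eqP; apply: contraR xi => thx.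
  have : x \in dom th :\: dom phi by rewrite !inE phix thx.
  by rewrite diff_i inE.
exists i, y; split => //; apply/ffunP=> x; rewrite ffunE.
  by case: (x =P i) => [->//|/eqP]; apply: th_phi.
by case: (x =P i) => [->//|/eqP xi]; rewrite th_phi.
Qed.

Variable V : nmodType.

Lemma sum_psub_pred (F : pfun n Y -> V) th s : #|dom th| = s.+1 ->
  \sum_(psi : pfun n Y | (#|dom psi| == s) && psub psi th) F psi
  = \sum_(j in dom th) F (upd th j None).
Proof.
move=> card_th.
rewrite -(big_imset _ (h := fun j => upd th j None)); last first.
  move=> j j' jD j'D /ffunP /(_ j); rewrite !ffunE eqxx.
  by case: (j =P j') => // _ E; move: jD; rewrite inE -E.
apply: eq_bigl => psi; apply/andP/imsetP.
  case=> /eqP card_psi sub; rewrite -card_psi in card_th.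
  have [i [y [_ thE ->]]] := psub_covers sub card_th.
  by exists i => //; rewrite thE in_dom ffunE eqxx.
case=> j jD ->; split; last exact: psub_upd_None.
by rewrite (card_dom_upd_None jD card_th).
Qed.

Lemma sum_psub_succ (F : pfun n Y -> V) phi s : #|dom phi| = s ->
  \sum_(th : pfun n Y | (#|dom th| == s.+1) && psub phi th) F th
  = \sum_(i in ~: dom phi) \sum_(y : Y) F (upd phi i (Some y)).
Proof.
move=> card_phi; rewrite pair_big_dep /=.
rewrite (eq_bigl (mem [set p : 'I_n * Y | p.1 \in ~: dom phi])); last first.
  by move=> p; rewrite !inE andbT.
rewrite -(big_imset _ (h := fun p : 'I_n * Y => upd phi p.1 (Some p.2))); last first.
  move=> [i y] [i' y']; rewrite !inE /= !negbK => /eqP phii /eqP phii' /ffunP /(_ i).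
  by rewrite !ffunE eqxx; case: (i =P i') => [<- [->]//|_]; rewrite phii.
apply: eq_bigl => th; apply/andP/imsetP.
  case=> /eqP card_th sub; rewrite -card_phi in card_th.
  have [i [y [phii -> _]]] := psub_covers sub card_th.
  by exists (i, y) => //; rewrite !inE negbK phii.
case=> [[i y]]; rewrite !inE negbK /= => /eqP phii ->; split; last exact: psub_upd_Some.
by rewrite dom_upd_Some cardsU1 in_dom phii card_phi.
Qed.

End PartialFunctions.

Section LevelOperators.
Variables (C : numClosedFieldType) (n : nat) (Y : finType).
Implicit Types (F G : {ffun pfun n Y -> C}) (th phi : pfun n Y).

Definition supported_at h F := forall th, #|dom th| != h -> F th = 0.

Definition resample F phi := \sum_(j in dom phi) \sum_(y : Y) F (upd phi j (Some y)).

Definition resample_eigen h (c : C) F :=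
  forall phi, #|dom phi| = h -> resample F phi = c * F phi.

Lemma Dstar_supported h G : supported_at h.+1 (Dstar h.+1 G).
Proof. by move=> th th_h; rewrite ffunE th_h orbT. Qed.

Lemma DstarE h G th :
  #|dom th| = h.+1 -> Dstar h.+1 G th = \sum_(j in dom th) G (upd th j None).
Proof. by move=> th_h; rewrite ffunE th_h eqxx /=; apply: sum_psub_pred. Qed.

Lemma DopE h F phi : #|dom phi| = h ->
  Dop h.+1 F phi = \sum_(i in ~: dom phi) \sum_(y : Y) F (upd phi i (Some y)).
Proof. by move=> phi_h; rewrite ffunE phi_h eqxx /=; apply: sum_psub_succ. Qed.

Lemma Dstar0 h : Dstar h (0 : {ffun pfun n Y -> C}) = 0.
Proof.
by apply/ffunP=> th; rewrite !ffunE; case: ifP => // _; apply: big1 => ? _; rewrite ffunE.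
Qed.

Lemma DstarZ h (a : C) G : Dstar h [ffun x => a * G x] = [ffun x => a * Dstar h G x].
Proof.
apply/ffunP=> th; rewrite !ffunE; case: ifP => _; first by rewrite mulr0.
by rewrite mulr_sumr; apply: eq_bigr => psi _; rewrite ffunE.
Qed.

Lemma resample_eigen_Dstar s c G :
  resample_eigen s c G -> resample_eigen s.+1 (c + #|Y|%:R) (Dstar s.+1 G).
Proof.
move=> eigG th th_s.
transitivity (\sum_(j in dom th) \sum_(y : Y)
   (G (upd th j None) + \sum_(i in dom th :\ j) G (upd (upd th i None) j (Some y)))).
  apply: eq_bigr => j jD; apply: eq_bigr => y _.
  rewrite DstarE; last by rewrite dom_upd_in.
  rewrite dom_upd_in // (big_setD1 j jD) upd_upd; congr (_ + _).
  apply: eq_bigr => i; rewrite !inE => /andP[ij _].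
  by rewrite updC // eq_sym.
under eq_bigr => j _ do rewrite big_split /= sumr_const exchange_big /=.
rewrite big_split /= exchange_big_setD1.
rewrite [X in _ + X](eq_bigr (fun i => c * G (upd th i None))); last first.
  by move=> i iD; rewrite -dom_upd_None; apply: eigG; exact: card_dom_upd_None.
by rewrite -mulr_sumr sumrMnl DstarE // mulrDl addrC mulr_natl.
Qed.

Definition add_remove_sum F phi :=
  \sum_(i in ~: dom phi) \sum_(y : Y) \sum_(j in dom phi)
    F (upd (upd phi j None) i (Some y)).

Lemma Dop_Dstar_at h F phi : #|dom phi| = h ->
  Dop h.+1 (Dstar h.+1 F) phi = F phi *+ #|Y| *+ (n - h) + add_remove_sum F phi.
Proof.
move=> phi_h.
have card_compl : #|~: dom phi| = (n - h)%N by rewrite cardsCs setCK card_ord phi_h.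
rewrite DopE // -card_compl.
have -> : F phi *+ #|Y| *+ #|~: dom phi| = \sum_(i in ~: dom phi) \sum_(y : Y) F phi.
  by rewrite !sumr_const.
rewrite /add_remove_sum -big_split /=.
apply: eq_bigr => i; rewrite inE in_dom negbK => /eqP phii.
rewrite -big_split /=; apply: eq_bigr => y _.
rewrite DstarE; last by rewrite dom_upd_Some cardsU1 in_dom phii phi_h.
rewrite dom_upd_Some big_setU1 ?in_dom ?phii //= upd_upd upd_id //.
congr (_ + _); apply: eq_bigr => j jD.
by rewrite updC //; apply: contraTneq jD => <-; rewrite in_dom phii.
Qed.

Lemma Dstar_Dop_at h F phi : #|dom phi| = h ->
  Dstar h (Dop h F) phi = resample F phi + add_remove_sum F phi.
Proof.
case: h => [|h] phi_h.
  have dom0 : dom phi = set0 by apply: cards0_eq.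
  rewrite ffunE eqxx /= /resample /add_remove_sum dom0 !big_set0 add0r.
  by rewrite big1 // => i _; rewrite big1 // => y _; rewrite big_set0.
have -> : add_remove_sum F phi = \sum_(j in dom phi) \sum_(i in ~: dom phi) \sum_(y : Y)
    F (upd (upd phi j None) i (Some y)).
  by rewrite /add_remove_sum; under eq_bigr => i _ do rewrite exchange_big /=;
    apply: exchange_big.
rewrite DstarE // -big_split /=.
apply: eq_bigr => j jD; rewrite DopE; last exact: card_dom_upd_None.
have -> : ~: dom (upd phi j None) = j |: ~: dom phi.
  by apply/setP=> x; rewrite dom_upd_None !inE negb_and negbK orbC.
rewrite big_setU1; last by rewrite inE negbK.
by congr (_ + _); apply: eq_bigr => y _; rewrite upd_upd.
Qed.

Lemma Dop_DstarE h c F : supported_at h F -> resample_eigen h c F ->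
  Dop h.+1 (Dstar h.+1 F) =
  [ffun phi => Dstar h (Dop h F) phi + ((n - h)%:R * #|Y|%:R - c) * F phi].
Proof.
move=> suppF eigF; apply/ffunP => phi; rewrite [RHS]ffunE.
have [phi_h|phi_h] := eqVneq #|dom phi| h; last first.
  by rewrite suppF // mulr0 addr0 !ffunE /= phi_h !orbT.
rewrite Dop_Dstar_at // Dstar_Dop_at // eigF //.
by rewrite -mulr_natr -mulr_natr; ring.
Qed.

Lemma supported_lincomb h (I : finType) (P : pred I) (w : I -> C)
    (G : I -> {ffun pfun n Y -> C}) :
  (forall i, P i -> supported_at h (G i)) ->
  supported_at h [ffun th => \sum_(i | P i) w i * G i th].
Proof.
by move=> suppG th th_h; rewrite ffunE big1 // => i Pi; rewrite suppG ?mulr0.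
Qed.

Lemma resample_eigen_lincomb h c (I : finType) (P : pred I) (w : I -> C)
    (G : I -> {ffun pfun n Y -> C}) :
  (forall i, P i -> resample_eigen h c (G i)) ->
  resample_eigen h c [ffun th => \sum_(i | P i) w i * G i th].
Proof.
move=> eigG phi phi_h; rewrite ffunE mulr_sumr /resample.
under eq_bigr => j _ do under eq_bigr => y _ do rewrite ffunE.
under eq_bigr => j _ do rewrite exchange_big /=.
rewrite exchange_big /=; apply: eq_bigr => i Pi.
under eq_bigr => j _ do rewrite -mulr_sumr.
by rewrite -mulr_sumr; have := eigG i Pi phi phi_h; rewrite /resample => ->; rewrite mulrCA.
Qed.

End LevelOperators.

Section SymmetricStochastic.
Variables (C : numClosedFieldType) (Y : finType) (q : Y -> Y -> C).
Hypothesis q_ssi : symmetric_stochastic_irreducible q.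

Lemma stochastic_colsum y' : \sum_(y : Y) q y y' = 1.
Proof.
by case: q_ssi => qC _ rowsum _; rewrite -(rowsum y'); apply: eq_bigr => y _; apply: qC.
Qed.

Lemma sum_Qop f : \sum_(y : Y) Qop q f y = \sum_(y : Y) f y.
Proof.
rewrite /Qop exchange_big /=; apply: eq_bigr => y' _.
by rewrite -mulr_suml stochastic_colsum mul1r.
Qed.

Lemma sum_eigenvector_eq0 f (mu : C) :
  Qop q f =1 (fun y => mu * f y) -> mu != 1 -> \sum_(y : Y) f y = 0.
Proof.
move=> Qf mu_neq1; have := sum_Qop f.
rewrite (eq_bigr _ (fun y _ => Qf y)) -mulr_sumr => /eqP.
rewrite -subr_eq0 -{2}(mul1r (\sum_y f y)) -mulrBl mulf_eq0 subr_eq0.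
by rewrite (negbTE mu_neq1) => /eqP.
Qed.

(* The Dirichlet form sum_{y,y'} q(y,y') |f y - f y'|^2 vanishes for a
   harmonic f, and all its terms are nonnegative. *)
Lemma harmonic_eq_edge f : Qop q f =1 f ->
  forall y y', q y y' != 0 -> f y = f y'.
Proof.
move=> Qf; have [_ q_ge0 rowsum _] := q_ssi.
pose g y := f y * (f y)^*.
have local_form y : \sum_(y' : Y) q y y' * ((f y - f y') * (f y - f y')^*)
    = - g y + \sum_(y' : Y) q y y' * g y'.
  have Qf_conj : \sum_(y' : Y) q y y' * (f y')^* = (f y)^*.
    rewrite -(Qf y) /Qop rmorph_sum; apply: eq_bigr => y' _.
    by rewrite rmorphM /= (geC0_conj (q_ge0 y y')).
  have Qf_y : \sum_(y' : Y) q y y' * f y' = f y by rewrite -(Qf y).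
  transitivity (\sum_(y' : Y) (g y * q y y' - f y * (q y y' * (f y')^*)
      - (f y)^* * (q y y' * f y') + q y y' * g y')).
    by apply: eq_bigr => y' _; rewrite /g rmorphB /=; ring.
  by rewrite !big_split /= !sumrN -!mulr_sumr rowsum Qf_conj Qf_y /g; ring.
have form0 : \sum_(y : Y) \sum_(y' : Y) q y y' * ((f y - f y') * (f y - f y')^*) = 0.
  rewrite (eq_bigr _ (fun y _ => local_form y)) big_split /= sumrN exchange_big /=.
  under [X in _ + X]eq_bigr => y' _ do rewrite -mulr_suml stochastic_colsum mul1r.
  by rewrite addNr.
have term_ge0 y y' : 0 <= q y y' * ((f y - f y') * (f y - f y')^*).
  by rewrite mulr_ge0 ?mul_conjC_ge0.
move=> y y' qyy'.
have row0 : \sum_(z : Y) q y z * ((f y - f z) * (f y - f z)^*) = 0.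
  by apply: (psumr_eq0P _ form0) => // z _; apply: sumr_ge0.
have := psumr_eq0P (fun z _ => term_ge0 y z) row0 => /(_ y' isT) /eqP.
by rewrite mulf_eq0 (negbTE qyy') /= mul_conjC_eq0 subr_eq0 => /eqP.
Qed.

Lemma harmonic_const f : Qop q f =1 f -> forall y y', f y = f y'.
Proof.
move=> Qf y y'; have [_ _ _ irr] := q_ssi.
have [t qt_pos] := irr y y'; have : qpow q t y y' != 0 by rewrite gt_eqF.
elim: t y' {qt_pos} => [|t IH] y' /=; first by case: (y =P y') => [->|]; rewrite ?eqxx.
have [z|all0] := pickP (fun z => qpow q t y z * q z y' != 0).
  rewrite mulf_eq0 negb_or => /andP[qt_yz qzy'] _.
  by rewrite (IH z qt_yz); apply: harmonic_eq_edge.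
by rewrite big1 ?eqxx // => z _; apply/eqP/negbFE/all0.
Qed.

Variables (m : nat) (lam : 'I_m.+1 -> C).
Hypothesis lam_enum : eigen_enumeration q lam.

Lemma sum_inW i f y0 : inW q lam i f ->
  \sum_(y : Y) f y = if i == ord0 then #|Y|%:R * f y0 else 0.
Proof.
have [lam0 lam_inj _ _] := lam_enum.
have [->|i0] := eqVneq i ord0 => [Qf|Qf].
  have Qf1 : Qop q f =1 f by move=> y; rewrite Qf lam0 mul1r.
  by rewrite (eq_bigr (fun=> f y0)) ?sumr_const ?mulr_natl // => y _; apply: harmonic_const.
apply: sum_eigenvector_eq0 Qf _.
by apply: contra_neq i0 => lami1; apply: lam_inj; rewrite lami1 lam0.
Qed.

End SymmetricStochastic.

Lemma type_size_split m (b : 'I_m.+1 -> nat) : type_size b = (b ord0 + type_len b)%N.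
Proof. by rewrite /type_size /type_len (bigD1 ord0). Qed.

Lemma type_len_prime m (b : 'I_m.+1 -> nat) : type_len (type_prime b) = type_len b.
Proof. by apply: eq_bigr => i /negbTE i0; rewrite /type_prime i0. Qed.

Section FundamentalFunctions.
Variables (C : numClosedFieldType) (n : nat) (Y : finType) (q : Y -> Y -> C).
Variables (m : nat) (lam : 'I_m.+1 -> C).
Hypotheses (q_ssi : symmetric_stochastic_irreducible q) (lam_enum : eigen_enumeration q lam).
Implicit Types (A : {set 'I_n}) (f : 'I_n -> Y -> C) (phi : pfun n Y) (F : {ffun pfun n Y -> C}).

Definition fund_fun A f : {ffun pfun n Y -> C} :=
  [ffun th => if dom th == A then \prod_(j in A) oapp (f j) 0 (th j) else 0].

Lemma fund_fun_supported A f : supported_at #|A| (fund_fun A f).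
Proof.
by move=> th; rewrite ffunE; case: (dom th =P A) => // ->; rewrite eqxx.
Qed.

Lemma fund_fun_setD1 A f phi j : dom phi = A -> j \in A ->
  fund_fun A f phi = oapp (f j) 0 (phi j) * \prod_(i in A :\ j) oapp (f i) 0 (phi i).
Proof. by move=> domA jA; rewrite ffunE domA eqxx (big_setD1 j jA). Qed.

Lemma sum_fund_fun_upd A f phi j : dom phi = A -> j \in A ->
  \sum_(y : Y) fund_fun A f (upd phi j (Some y))
  = (\sum_(y : Y) f j y) * \prod_(i in A :\ j) oapp (f i) 0 (phi i).
Proof.
move=> domA jA; rewrite mulr_suml; apply: eq_bigr => y _.
rewrite (@fund_fun_setD1 _ _ _ j) ?dom_upd_in ?domA // ffunE eqxx.
by congr (_ * _); apply: eq_bigr => i; rewrite !inE ffunE => /andP[/negbTE ->].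
Qed.

Lemma resample_eigen_fund_fun A (idx : 'I_n -> 'I_m.+1) f :
  (forall j, j \in A -> inW q lam (idx j) (f j)) ->
  resample_eigen #|A| (#|Y|%:R * #|[set j in A | idx j == ord0]|%:R) (fund_fun A f).
Proof.
move=> fW phi _; rewrite /resample.
have [domA|domA] := eqVneq (dom phi) A; last first.
  rewrite [fund_fun A f phi]ffunE (negbTE domA) mulr0.
  by apply: big1 => j jD; apply: big1 => y _; rewrite ffunE dom_upd_in // (negbTE domA).
have term_j j : j \in dom phi -> \sum_(y : Y) fund_fun A f (upd phi j (Some y))
    = (if idx j == ord0 then #|Y|%:R else 0) * fund_fun A f phi.
  rewrite domA => jA; have : j \in dom phi by rewrite domA.
  rewrite in_dom; case phij: (phi j) => [y0|//] _.
  rewrite sum_fund_fun_upd // (fund_fun_setD1 _ domA jA) phij /=.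
  by rewrite (sum_inW q_ssi lam_enum y0 (fW j jA)); case: eqP; rewrite ?mul0r // mulrA.
rewrite (eq_bigr _ term_j) -mulr_suml -big_mkcondr /= domA.
rewrite (eq_bigl (mem [set j in A | idx j == ord0])) => [|j]; last by rewrite !inE.
by rewrite sumr_const mulr_natr.
Qed.

Lemma isFund_resample_eigen b A F : isFund q lam b A F ->
  supported_at #|A| F /\ resample_eigen #|A| (#|Y|%:R * (b ord0)%:R) F.
Proof.
case=> idx [f [fW card_idx ->]]; split; first exact: fund_fun_supported.
by rewrite -card_idx; apply: resample_eigen_fund_fun.
Qed.

Lemma Pkb_resample_eigen k b F : Pkb q lam k b F ->
  supported_at k F /\ resample_eigen k (#|Y|%:R * (b ord0)%:R) F.
Proof.
case=> G [PG ->].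
have -> : [ffun th => \sum_(A : {set 'I_n} | #|A| == k) G A th] =
          [ffun th => \sum_(A : {set 'I_n} | #|A| == k) 1 * G A th].
  by apply/ffunP => th; rewrite !ffunE; apply: eq_bigr => A _; rewrite mul1r.
have props_A A : #|A| == k ->
    supported_at k (G A) /\ resample_eigen k (#|Y|%:R * (b ord0)%:R) (G A).
  move=> /eqP cardA; have [r [c [Gs [fundGs ->]]]] := PG A cardA.
  have props_s s : supported_at k (Gs s) /\
      resample_eigen k (#|Y|%:R * (b ord0)%:R) (Gs s).
    by rewrite -cardA; apply: isFund_resample_eigen.
  by split; [apply: (supported_lincomb (P := xpredT))
            | apply: (resample_eigen_lincomb (P := xpredT))] => s _; case: (props_s s).
by split; [apply: supported_lincomb | apply: resample_eigen_lincomb] => A /props_A [].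
Qed.

End FundamentalFunctions.

Section IteratedDstar.
Variables (C : numClosedFieldType) (n : nat) (Y : finType) (q : Y -> Y -> C).
Variables (m : nat) (lam : 'I_m.+1 -> C) (k : nat).
Hypotheses (q_ssi : symmetric_stochastic_irreducible q) (lam_enum : eigen_enumeration q lam).

Lemma Pkb_resample_eigen_len b (F : {ffun pfun n Y -> C}) :
  type_size b = k -> Pkb q lam k b F ->
  [/\ (type_len b <= k)%N, supported_at k F
    & resample_eigen k (#|Y|%:R * (k - type_len b)%:R) F].
Proof.
move=> size_b /(Pkb_resample_eigen q_ssi lam_enum) [suppF eigF].
rewrite type_size_split in size_b.
have b0 : (k - type_len b)%N = b ord0 by rewrite -size_b addnK.
by rewrite b0; split=> //; rewrite -size_b leq_addl.
Qed.

Lemma Phbk_resample_eigen h b (F : {ffun pfun n Y -> C}) : Phbk q lam k h b F ->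
  [/\ (k <= h)%N, (type_len b <= k)%N, supported_at h F
    & resample_eigen h (#|Y|%:R * (h - type_len b)%:R) F].
Proof.
elim: h b F => [|h IH] b F /=; case: eqP => [-> [size_b PF _]|_ //].
- by have [] := Pkb_resample_eigen_len size_b PF.
- by have [] := Pkb_resample_eigen_len size_b PF.
case=> kh _ len_b [G [PG ->]].
have [_ _ _ eigG] := IH _ _ PG; rewrite type_len_prime in eigG.
split=> //; [exact: ltnW | exact: Dstar_supported |].
have len_h : (type_len b <= h)%N by rewrite -ltnS (leq_ltn_trans len_b kh).
by rewrite subSn // mulrSr mulrDr mulr1; apply: resample_eigen_Dstar.
Qed.

Lemma Dop_Dstar_of_Dop0 h l (F : {ffun pfun n Y -> C}) : (h < n)%N -> (l <= h)%N ->
  supported_at h F -> resample_eigen h (#|Y|%:R * (h - l)%:R) F -> Dop h F = 0 ->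
  Dop h.+1 (Dstar h.+1 F) =
  [ffun th => (#|Y|%:R * ((n + l)%:R - h%:R - h%:R) * (h - h + 1)%:R) * F th].
Proof.
move=> h_n l_h suppF eigF DF; rewrite (Dop_DstarE suppF eigF) DF Dstar0.
apply/ffunP => th; rewrite !ffunE subnn add0r !natrB ?(ltnW h_n) // natrD; ring.
Qed.

Lemma Dop_Dstar_Phbk h b (F : {ffun pfun n Y -> C}) : (h < n)%N ->
  Phbk q lam k h b F ->
  Dop h.+1 (Dstar h.+1 F) =
  [ffun th => (#|Y|%:R * ((n + type_len b)%:R - k%:R - h%:R) * (h - k + 1)%:R) * F th].
Proof.
elim: h b F => [|h IH] b F h_n PF; have [kh len_b suppF eigF] := Phbk_resample_eigen PF;
  simpl in PF; move: PF; case: eqP => [hk [_ _ DF]|_ //].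
1,2: by rewrite -hk in len_b DF *; apply: Dop_Dstar_of_Dop0.
case=> kh' _ _ [G [PG FG]].
have DF : Dop h.+1 F = [ffun th =>
    (#|Y|%:R * ((n + type_len b)%:R - k%:R - h%:R) * (h - k + 1)%:R) * G th].
  by rewrite FG (IH _ _ (ltnW h_n) PG) type_len_prime.
rewrite (Dop_DstarE suppF eigF) DF DstarZ -FG; apply/ffunP => th; rewrite !ffunE.
have len_h : (type_len b <= h.+1)%N by apply: leq_trans len_b kh.
by rewrite !natrD !natrB ?(ltnW h_n) // -addn1 natrD; ring.
Qed.

End IteratedDstar.

Theorem proposition7p8 (C : numClosedFieldType) (n : nat) (Y : finType)
  (q : Y -> Y -> C) (m : nat) (lam : 'I_m.+1 -> C)
  (k h : nat) (a : 'I_m.+1 -> nat) (F : {ffun pfun n Y -> C}) :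
  symmetric_stochastic_irreducible q ->
  eigen_enumeration q lam ->
  (k <= h)%N -> (h < n)%N ->
  type_size a = h.+1 -> (type_len a <= k)%N ->
  Phbk q lam k h (type_prime a) F ->
  Dop h.+1 (Dstar h.+1 F) =
  [ffun th => (#|Y|%:R * ((n + type_len a)%:R - k%:R - h%:R) * (h - k + 1)%:R) * F th].
Proof.
move=> q_ssi lam_enum _ h_n _ _ PF.
by rewrite (Dop_Dstar_Phbk q_ssi lam_enum h_n PF) type_len_prime.
Qed.
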